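(* Let $A$ be a real symmetric matrix, normalized so that the minimal entry of every row and every column is $0$, and suppose $A$ has symmetric tropical rank two. Then after possibly a diagonal permutation, $A$ has the block structure $$\begin{pmatrix}\mathbf 0&\mathbf 0&\mathbf 0&\mathbf 0&\mathbf 0\\ \mathbf 0&B_1&\mathbf 0&\mathbf 0&\mathbf 0\\ \mathbf 0&\mathbf 0&B_2&\mathbf 0&\mathbf 0\\ \mathbf 0&\mathbf 0&\mathbf 0&\mathbf 0&C\\ \mathbf 0&\mathbf 0&\mathbf 0&C^{T}&\mathbf 0\end{pmatrix},$$ where $B_1,B_2$ are symmetric with all entries positive, $C$ has all entries nonnegative and no column consisting entirely of zeros, and each $\mathbf 0$ is a zero matrix of appropriate size; any of the blocks (the initial block of all-zero rows/columns, $B_1$, $B_2$, $C$) may have size zero. Moreover, $A$ is neither the zero matrix nor a matrix consisting of just one of the positive blocks $B_1$ or $B_2$.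
   Context: A diagonal permutation of a square matrix permutes its rows and its columns by the same permutation. For an $r\times r$ submatrix of a real symmetric matrix $A$ with row index set $I$ and column index set $J$, each bijection $\rho:I\to J$ gives a monomial $\prod_{i\in I}X_{i,\rho(i)}$ in commuting variables subject to $X_{i,j}=X_{j,i}$, with value $\sum_{i\in I}A_{i,\rho(i)}$; the submatrix is symmetrically tropically singular if the minimum value is attained by at least two distinct monomials. The symmetric tropical rank of $A$ is the largest $r$ such that $A$ has an $r\times r$ submatrix that is not symmetrically tropically singular. *)

From HB Require Import structures.
From mathcomp Require Import all_boot all_order all_algebra all_fingroup.
Set Implicit Arguments. Unset Strict Implicit. Unset Printing Implicit Defensive.
Import Order.TTheory GRing.Theory Num.Theory.
Local Open Scope ring_scope.

Section TropRank.
Variables (R : realFieldType) (n : nat).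

Definition is_bij (I J : {set 'I_n}) (rho : 'I_n -> 'I_n) : Prop :=
  {in I &, injective rho} /\ rho @: I = J.

(* value of the monomial prod_{i in I} X_{i,rho i} : sum_{i in I} A_{i,rho i} *)
Definition mono_val (A : 'M[R]_n) (I : {set 'I_n}) (rho : 'I_n -> 'I_n) : R :=
  \sum_(i in I) A i (rho i).

(* exponent of the (symmetric) variable X_{a,b} = X_{b,a} in prod_{i in I} X_{i,rho i} *)
Definition mono_exp (I : {set 'I_n}) (rho : 'I_n -> 'I_n) (a b : 'I_n) : nat :=
  #|[set i in I | ((i == a) && (rho i == b)) || ((i == b) && (rho i == a))]|.

Definition same_mono (I : {set 'I_n}) (rho1 rho2 : 'I_n -> 'I_n) : Prop :=
  forall a b, mono_exp I rho1 a b = mono_exp I rho2 a b.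

Definition sym_trop_singular (A : 'M[R]_n) (I J : {set 'I_n}) : Prop :=
  exists rho1 rho2 : 'I_n -> 'I_n,
    [/\ is_bij I J rho1, is_bij I J rho2,
        (forall rho, is_bij I J rho -> mono_val A I rho1 <= mono_val A I rho),
        mono_val A I rho2 = mono_val A I rho1
      & ~ same_mono I rho1 rho2].

Definition sym_trop_rank_is (A : 'M[R]_n) (r : nat) : Prop :=
  (exists I J : {set 'I_n}, [/\ #|I| = r, #|J| = r & ~ sym_trop_singular A I J])
  /\ (forall I J : {set 'I_n}, #|I| = #|J| -> (r < #|I|)%N -> sym_trop_singular A I J).

Definition normalized (A : 'M[R]_n) : Prop :=
  (forall i, (forall j, 0 <= A i j) /\ exists j, A i j = 0) /\
  (forall j, (forall i, 0 <= A i j) /\ exists i, A i j = 0).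

End TropRank.

Definition blk5 (R : realFieldType) (n0 n1 n2 n3 n4 : nat)
  (B1 : 'M[R]_n1) (B2 : 'M[R]_n2) (C : 'M[R]_(n3, n4))
  : 'M[R]_(n0 + (n1 + (n2 + (n3 + n4)))) :=
  block_mx (0 : 'M[R]_(n0, n0)) 0 0
    (block_mx B1 0 0 (block_mx B2 0 0 (block_mx (0 : 'M[R]_(n3, n3)) C C^T 0))).

From HB Require Import structures.
From mathcomp Require Import all_boot all_order all_algebra all_fingroup zify.
Import Order.TTheory GRing.Theory Num.Theory.
Set Implicit Arguments. Unset Strict Implicit. Unset Printing Implicit Defensive.
Local Open Scope ring_scope.

(* Read the support of A as a graph with a loop at i when A i i != 0. As the
   entries are nonnegative, a 3x3 submatrix with a zero transversal is
   nonsingular as soon as all its zero transversals give the same monomial,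
   e.g. when its zeros sit on the diagonal and the entries above the diagonal
   are nonzero. Forbidding such submatrices shows that looped and unlooped
   indices are never adjacent, that adjacency is an equivalence relation with at
   most two classes on looped indices (the blocks B1 and B2), and that the
   unlooped indices of nonzero rows form complete bipartite components, whose
   2-colouring gives C. Sorting the indices by block gives the permutation. *)

Section SymmetricTropicalSingularity.
Variables (R : realFieldType) (n : nat).
Implicit Types (I J : {set 'I_n}) (rho : 'I_n -> 'I_n).

Lemma set3P (x a b c : 'I_n) :
  x \in [set a; b; c] -> [\/ x = a, x = b | x = c].
Proof. by rewrite !inE => /orP[/orP[]|] /eqP; [constructor 1|constructor 2|constructor 3]. Qed.

Lemma cards3 (a b c : 'I_n) : a != b -> a != c -> b != c -> #|[set a; b; c]| = 3%N.
Proof.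
by move=> ab ac bc; rewrite setUC cardsU1 cards2 !inE ab ![c == _]eq_sym (negbTE ac) (negbTE bc).
Qed.

Lemma is_bij_mem I J rho i : is_bij I J rho -> i \in I -> rho i \in J.
Proof. by case=> _ <- iI; apply: imset_f. Qed.

Lemma eq_in_same_mono I rho1 rho2 : {in I, rho1 =1 rho2} -> same_mono I rho1 rho2.
Proof.
move=> eq_rho a b; apply: eq_card => i; rewrite !inE.
by case iI: (i \in I) => //=; rewrite eq_rho.
Qed.

(* Since X_{i,j} = X_{j,i}, the factor X_{i, rho1 i} of the first monomial is the
   factor X_{rho1 i, i} of the second. *)
Lemma same_mono_inv I rho1 rho2 :
  {in I, forall i, rho1 i \in I} -> {in I, forall i, rho2 i \in I} ->
  {in I, cancel rho1 rho2} -> {in I, cancel rho2 rho1} -> same_mono I rho1 rho2.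
Proof.
have mono_exp_le r1 r2 : {in I, forall i, r1 i \in I} -> {in I, cancel r1 r2} ->
    forall a b, (mono_exp I r1 a b <= mono_exp I r2 a b)%N.
  move=> r1I r1K a b; rewrite /mono_exp -(card_in_imset (f := r1)); last first.
    by move=> i j; rewrite !inE => /andP[iI _] /andP[jI _] eq_ij; rewrite -(r1K i) // eq_ij r1K.
  apply/subset_leq_card/subsetP => y /imsetP[i]; rewrite !inE => /andP[iI e_i] ->.
  by rewrite r1I // r1K //=; case/orP: e_i => /andP[/eqP-> /eqP->]; rewrite !eqxx ?orbT.
by move=> r1I r2I r1K r2K a b; apply/eqP; rewrite eqn_leq !mono_exp_le.
Qed.

Definition map3 (a b c a' b' c' : 'I_n) (x : 'I_n) : 'I_n :=
  if x == a then a' else if x == b then b' else c'.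

Section Map3.
Variables (a b c a' b' c' : 'I_n).
Hypotheses (ab : a != b) (ac : a != c) (bc : b != c).

Lemma map3E :
  [/\ map3 a b c a' b' c' a = a', map3 a b c a' b' c' b = b' & map3 a b c a' b' c' c = c'].
Proof. by rewrite /map3 eqxx eq_sym (negbTE ab) eqxx eq_sym (negbTE ac) eq_sym (negbTE bc). Qed.

Lemma map3_bij : a' != b' -> a' != c' -> b' != c' ->
  is_bij [set a; b; c] [set a'; b'; c'] (map3 a b c a' b' c').
Proof.
move=> ab' ac' bc'; have [ea eb ec] := map3E.
have img : map3 a b c a' b' c' @: [set a; b; c] = [set a'; b'; c'].
  by rewrite ?imsetU ?imsetU1 ?imset_set1 ea eb ec.
by split=> //; apply/imset_injP; rewrite img !cards3.
Qed.
End Map3.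

Lemma is_bij_neq I J rho x y :
  is_bij I J rho -> x \in I -> y \in I -> x != y -> rho x != rho y.
Proof. by case=> rho_inj _ xI yI; apply: contra_neq => /rho_inj->. Qed.

Lemma derangement3 x y z rho :
  x != y -> x != z -> y != z -> is_bij [set x; y; z] [set x; y; z] rho ->
  {in [set x; y; z], forall t, rho t != t} ->
  [/\ rho x = y, rho y = z & rho z = x] \/ [/\ rho x = z, rho y = x & rho z = y].
Proof.
move=> xy xz yz bij_rho fixfree.
have [xI yI zI] : [/\ x \in [set x; y; z], y \in [set x; y; z] & z \in [set x; y; z]].
  by rewrite !inE !eqxx ?orbT.
move: (fixfree x xI) (fixfree y yI) (fixfree z zI) (is_bij_neq bij_rho xI yI xy)
  (is_bij_neq bij_rho xI zI xz) (is_bij_neq bij_rho yI zI yz).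
case/set3P: (is_bij_mem bij_rho xI) => ->; case/set3P: (is_bij_mem bij_rho yI) => ->;
  case/set3P: (is_bij_mem bij_rho zI) => ->; rewrite ?eqxx //; by [left | right].
Qed.

Lemma pair_bij (a b e f : 'I_n) : a != b -> e != f ->
  is_bij [set a; b] [set e; f] (fun i => if i == a then e else f).
Proof.
move=> ab ef; have img : (fun i => if i == a then e else f) @: [set a; b] = [set e; f].
  by rewrite imsetU1 imset_set1 eqxx eq_sym (negbTE ab).
by split=> //; apply/imset_injP; rewrite img !cards2 ab ef.
Qed.

(* The exponent of X_{a,c} is 1 in X_{a,c} X_{b,d} and 0 in X_{a,d} X_{b,c}. *)
Lemma pair_swap_not_same_mono (a b c d : 'I_n) : a != b -> c != d ->
  ~ same_mono [set a; b] (fun i => if i == a then c else d) (fun i => if i == a then d else c).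
Proof.
move=> ab cd /(_ a c)/eqP; apply/negP; rewrite /mono_exp.
set S := [set i in _ | _ || (i == c) && ((if i == a then d else c) == a)].
suff -> : S = set0.
  by rewrite cards0 -lt0n card_gt0; apply/set0Pn; exists a; rewrite !inE !eqxx.
apply/setP => i; rewrite !inE.
case: (eqVneq i a) => [->|ia] /=.
  rewrite [d == c]eq_sym (negbTE cd) /=.
  by case: (eqVneq a c) => [ac|]; rewrite ?andbF //= ac eq_sym (negbTE cd).
by case: (eqVneq i c) => [ic|]; rewrite ?andbF // -ic (negbTE ia) !andbF.
Qed.

Lemma const_cards2_singular (A : 'M[R]_n) I J (x : R) :
  #|I| = 2%N -> #|J| = 2%N -> {in I & J, forall i j, A i j = x} ->
  sym_trop_singular A I J.
Proof.
move=> /eqP/cards2P[a [b [ab ->]]] /eqP/cards2P[c [d [cd ->]]] A_const.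
have val_rho rho : is_bij [set a; b] [set c; d] rho ->
    mono_val A [set a; b] rho = \sum_(i in [set a; b]) x.
  by move=> bij; apply: eq_bigr => i iI; rewrite A_const ?(is_bij_mem bij).
have bij1 : is_bij [set a; b] [set c; d] (fun i => if i == a then c else d).
  exact: pair_bij.
have bij2 : is_bij [set a; b] [set c; d] (fun i => if i == a then d else c).
  by rewrite [[set c; d]]setUC; apply: pair_bij; rewrite // eq_sym.
exists (fun i => if i == a then c else d), (fun i => if i == a then d else c).
split=> //; first by move=> rho /val_rho->; rewrite val_rho.
  by rewrite !val_rho.
exact: pair_swap_not_same_mono.
Qed.

Variable A : 'M[R]_n.
Hypothesis A_ge0 : forall i j, 0 <= A i j.

Definition zero_along I rho := {in I, forall i, A i (rho i) = 0}.

Lemma nonsingular_of_zero_bijs I J rho0 :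
  is_bij I J rho0 -> zero_along I rho0 ->
  (forall rho1 rho2, is_bij I J rho1 -> is_bij I J rho2 ->
     zero_along I rho1 -> zero_along I rho2 -> same_mono I rho1 rho2) ->
  ~ sym_trop_singular A I J.
Proof.
move=> bij0 zero0 same [rho1 [rho2 [bij1 bij2 min1 val21 not_same]]].
have val0 : mono_val A I rho0 = 0 by apply: big1; exact: zero0.
have zero_of_val rho : mono_val A I rho = 0 -> zero_along I rho.
  by move=> val_rho i iI; apply: (psumr_eq0P (fun i _ => A_ge0 i (rho i)) val_rho).
have val1 : mono_val A I rho1 = 0.
  by apply/le_anti; rewrite -{1}val0 min1 //= sumr_ge0.
by apply: not_same; apply: same => //; apply: zero_of_val; rewrite ?val21.
Qed.

Lemma neq_of_zero_nonzero (f : 'I_n -> R) y z : f y = 0 -> f z != 0 -> y != z.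
Proof. by move=> fy; apply: contra_neq => <-; rewrite fy. Qed.

(* The nonzero entries above the diagonal force every zero bijection, row by
   row, to be the diagonal one. *)
Lemma triangular_zeros_nonsingular a b c a' b' c' :
  A a a' = 0 -> A b b' = 0 -> A c c' = 0 ->
  A a b' != 0 -> A a c' != 0 -> A b c' != 0 ->
  [/\ #|[set a; b; c]| = 3%N, #|[set a'; b'; c']| = 3%N
    & ~ sym_trop_singular A [set a; b; c] [set a'; b'; c']].
Proof.
move=> Aaa' Abb' Acc' Aab' Aac' Abc'.
have ba : b != a := neq_of_zero_nonzero (f := A^~ b') Abb' Aab'.
have ca : c != a := neq_of_zero_nonzero (f := A^~ c') Acc' Aac'.
have cb : c != b := neq_of_zero_nonzero (f := A^~ c') Acc' Abc'.
have a'b' : a' != b' := neq_of_zero_nonzero (f := A a) Aaa' Aab'.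
have a'c' : a' != c' := neq_of_zero_nonzero (f := A a) Aaa' Aac'.
have b'c' : b' != c' := neq_of_zero_nonzero (f := A b) Abb' Abc'.
have [ab ac bc] : [/\ a != b, a != c & b != c] by split; rewrite eq_sym.
have [ea eb ec] := map3E a' b' c' ab ac bc.
have [aI bI cI] : [/\ a \in [set a; b; c], b \in [set a; b; c] & c \in [set a; b; c]].
  by rewrite !inE !eqxx ?orbT.
have forced rho : is_bij [set a; b; c] [set a'; b'; c'] rho ->
    zero_along [set a; b; c] rho -> {in [set a; b; c], rho =1 map3 a b c a' b' c'}.
  move=> bij_rho zero_rho.
  have ra : rho a = a'.
    case/set3P: (is_bij_mem bij_rho aI) => // ra; move/eqP: (zero_rho a aI); rewrite ra.
      by rewrite (negbTE Aab').
    by rewrite (negbTE Aac').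
  have rb : rho b = b'.
    case/set3P: (is_bij_mem bij_rho bI) => // rb.
      by move: (is_bij_neq bij_rho bI aI ba); rewrite rb ra eqxx.
    by move/eqP: (zero_rho b bI); rewrite rb (negbTE Abc').
  have rc : rho c = c'.
    case/set3P: (is_bij_mem bij_rho cI) => // rc.
      by move: (is_bij_neq bij_rho cI aI ca); rewrite rc ra eqxx.
    by move: (is_bij_neq bij_rho cI bI cb); rewrite rc rb eqxx.
  by move=> x /set3P[]->; rewrite ?ea ?eb ?ec.
split; [exact: cards3 | exact: cards3 |].
apply: (nonsingular_of_zero_bijs (map3_bij ab ac bc a'b' a'c' b'c')).
  by move=> x /set3P[]->; rewrite ?ea ?eb ?ec.
move=> rho1 rho2 bij1 bij2 zero1 zero2; apply: eq_in_same_mono => x xI.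
by rewrite (forced rho1) ?(forced rho2).
Qed.

(* Here both zero bijections are 3-cycles, inverse to each other. *)
Lemma loop_cycle_nonsingular x y z :
  A x x != 0 -> A y y != 0 -> A z z != 0 -> A x y = 0 -> A y z = 0 -> A z x = 0 ->
  #|[set x; y; z]| = 3%N /\ ~ sym_trop_singular A [set x; y; z] [set x; y; z].
Proof.
move=> Axx Ayy Azz Axy Ayz Azx.
have yx : y != x := neq_of_zero_nonzero (f := A x) Axy Axx.
have zy : z != y := neq_of_zero_nonzero (f := A y) Ayz Ayy.
have xz : x != z := neq_of_zero_nonzero (f := A z) Azx Azz.
have [xy yz zx] : [/\ x != y, y != z & z != x] by split; rewrite eq_sym.
have [ex ey ez] := map3E y z x xy xz yz.
have cycle_set : [set y; z; x] = [set x; y; z] by apply/setP => t; rewrite !inE orbC orbA.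
have fixfree rho : zero_along [set x; y; z] rho -> {in [set x; y; z], forall t, rho t != t}.
  move=> zero_rho t tI; apply/eqP => rho_t; move/eqP: (zero_rho t tI); rewrite rho_t.
  by case/set3P: tI => ->; apply/negP.
split; first exact: cards3.
apply: (@nonsingular_of_zero_bijs _ _ (map3 x y z y z x)).
- by rewrite -{2}cycle_set; apply: map3_bij.
- by move=> t /set3P[]->; rewrite ?ex ?ey ?ez.
move=> rho1 rho2 bij1 bij2 /fixfree fix1 /fixfree fix2.
have [[r1x r1y r1z]|[r1x r1y r1z]] := derangement3 xy xz yz bij1 fix1;
have [[r2x r2y r2z]|[r2x r2y r2z]] := derangement3 xy xz yz bij2 fix2.
- by apply: eq_in_same_mono => t /set3P[]->; congruence.
- by apply: same_mono_inv => t tI; rewrite ?(is_bij_mem bij1 tI) ?(is_bij_mem bij2 tI) //;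
    case/set3P: tI => ->; congruence.
- by apply: same_mono_inv => t tI; rewrite ?(is_bij_mem bij1 tI) ?(is_bij_mem bij2 tI) //;
    case/set3P: tI => ->; congruence.
- by apply: eq_in_same_mono => t /set3P[]->; congruence.
Qed.
End SymmetricTropicalSingularity.

Definition block_of (n0 n1 n2 n3 p : nat) : nat :=
  (if p < n0 then 0 else if p < n0 + n1 then 1 else if p < n0 + n1 + n2 then 2
   else if p < n0 + n1 + n2 + n3 then 3 else 4)%N.

Lemma sort_by_class (n : nat) (c : 'I_n -> nat) : (forall u, c u < 5)%N ->
  exists n0 n1 n2 n3 n4 (h : (n0 + (n1 + (n2 + (n3 + n4))))%N = n) (s : 'S_n),
    forall p : 'I_n, c (s p) = block_of n0 n1 n2 n3 p.
Proof.
move=> c_lt5; pose L k := [seq u <- enum 'I_n | c u == k].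
pose Ls := L 0%N ++ L 1%N ++ L 2%N ++ L 3%N ++ L 4%N.
have size_Ls : size Ls = n.
  rewrite -[RHS](size_enum_ord n) /Ls /L.
  have : all (fun u => c u < 5)%N (enum 'I_n) by apply/allP => u _.
  elim: (enum 'I_n) => //= u s IH /andP[cu /IH <-]; rewrite !size_cat.
  by case: (c u) cu => [|[|[|[|[|k]]]]] //= _; lia.
have mem_L k u : (u \in L k) = (c u == k) by rewrite mem_filter mem_enum andbT.
have mem_Ls u : u \in Ls.
  by rewrite !mem_cat !mem_L; case: (c u) (c_lt5 u) => [|[|[|[|[|k]]]]].
have uniq_Ls : uniq Ls.
  by apply/card_uniqP; rewrite size_Ls -[RHS]card_ord; apply: eq_card => u; rewrite mem_Ls.
pose f p := nth p Ls p.
have f_inj : injective f.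
  move=> p q; rewrite /f (set_nth_default p q) ?size_Ls // => /eqP.
  by rewrite nth_uniq ?size_Ls // => /eqP/val_inj.
have h : (size (L 0%N) + (size (L 1%N) + (size (L 2%N) + (size (L 3%N) + size (L 4%N)))))%N = n.
  by rewrite -[RHS]size_Ls !size_cat.
exists (size (L 0%N)), (size (L 1%N)), (size (L 2%N)), (size (L 3%N)), (size (L 4%N)), h.
exists (perm f_inj) => p; rewrite permE /f /block_of.
have nth_L k i : (i < size (L k))%N -> c (nth p (L k) i) = k.
  by move/(mem_nth p); rewrite mem_L => /eqP.
have := ltn_ord p; rewrite -[X in (_ < X)%N]size_Ls !size_cat => lt_p.
by repeat (rewrite nth_cat; case: ifP => ?); repeat case: ifP => ?; first [apply: nth_L; lia | lia].
Qed.

(* Pairs of diagonal blocks of [blk5], numbered 0 to 4, whose crossing block may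
   be nonzero. *)
Definition block_compatible (k l : nat) : bool :=
  [|| (k == 1) && (l == 1), (k == 2) && (l == 2), (k == 3) && (l == 4)
    | (k == 4) && (l == 3)]%N.

Definition blk5_support (n0 n1 n2 n3 p q : nat) : bool :=
  [|| [&& n0 <= p < n0 + n1 & n0 <= q < n0 + n1],
      [&& n0 + n1 <= p < n0 + n1 + n2 & n0 + n1 <= q < n0 + n1 + n2],
      [&& n0 + n1 + n2 <= p < n0 + n1 + n2 + n3 & n0 + n1 + n2 + n3 <= q]
    | [&& n0 + n1 + n2 + n3 <= p & n0 + n1 + n2 <= q < n0 + n1 + n2 + n3]]%N.

Lemma blk5_support_of_block (n0 n1 n2 n3 p q : nat) :
  block_compatible (block_of n0 n1 n2 n3 p) (block_of n0 n1 n2 n3 q) ->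
  blk5_support n0 n1 n2 n3 p q.
Proof.
by rewrite /block_of /blk5_support; repeat case: ifP => ?; rewrite /block_compatible //=; lia.
Qed.

Lemma blk5_of_support (R : realFieldType) (n0 n1 n2 n3 n4 : nat)
    (X : 'M[R]_(n0 + (n1 + (n2 + (n3 + n4))))) :
  X^T = X -> (forall p q, X p q != 0 -> blk5_support n0 n1 n2 n3 p q) ->
  X = blk5 n0 (ulsubmx (drsubmx X)) (ulsubmx (drsubmx (drsubmx X)))
        (ursubmx (drsubmx (drsubmx (drsubmx X)))).
Proof.
move=> X_sym X_support; rewrite /blk5 -[LHS]submxK; congr block_mx; last first.
  rewrite -[LHS]submxK; congr block_mx; last first.
    rewrite -[LHS]submxK; congr block_mx; last first.
      rewrite -[LHS]submxK; congr block_mx.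
all: apply/matrixP => i j; rewrite !mxE.
2: by rewrite -[X in LHS]X_sym mxE.
all: apply/eqP/contraT => /X_support.
all: by rewrite /blk5_support /=; have := ltn_ord i; have := ltn_ord j; lia.
Qed.

Lemma blk5_relabel (R : realFieldType) (n : nat) (M : 'M[R]_n) (c : 'I_n -> nat) :
  M^T = M -> (forall u, c u < 5)%N ->
  (forall u v, M u v != 0 -> block_compatible (c u) (c v)) ->
  exists n0 n1 n2 n3 n4 (h : (n0 + (n1 + (n2 + (n3 + n4))))%N = n) (s : 'S_n)
         (e1 : 'I_n1 -> 'I_n) (e2 : 'I_n2 -> 'I_n) (e3 : 'I_n3 -> 'I_n) (e4 : 'I_n4 -> 'I_n),
  [/\ \matrix_(i, j) M (s i) (s j) =
        castmx (h, h) (blk5 n0 (\matrix_(i, j) M (e1 i) (e1 j))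
          (\matrix_(i, j) M (e2 i) (e2 j)) (\matrix_(i, j) M (e3 i) (e4 j))),
      (forall i, c (e1 i) = 1%N) /\ (forall i, c (e2 i) = 2%N),
      (forall i, c (e4 i) = 4%N)
    & forall u, c u = 3%N -> exists i, e3 i = u].
Proof.
move=> M_sym c_lt5 M_support.
have [n0 [n1 [n2 [n3 [n4 [h [s cs]]]]]]] := sort_by_class c_lt5.
pose e p := s (cast_ord h p).
have ce p : c (e p) = block_of n0 n1 n2 n3 p by rewrite /e cs.
pose X := castmx (esym h, esym h) (\matrix_(i, j) M (s i) (s j)).
have XE p q : X p q = M (e p) (e q).
  by rewrite castmxE mxE; congr (M (s _) (s _)); apply: val_inj.
have X_sym : X^T = X by apply/matrixP => p q; rewrite mxE !XE -[M in LHS]M_sym mxE.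
have X_support p q : X p q != 0 -> blk5_support n0 n1 n2 n3 p q.
  by rewrite XE => /M_support; rewrite !ce; apply: blk5_support_of_block.
pose e1 i := e (rshift n0 (lshift (n2 + (n3 + n4)) i)).
pose e2 i := e (rshift n0 (rshift n1 (lshift (n3 + n4) i))).
pose e3 i := e (rshift n0 (rshift n1 (rshift n2 (lshift n4 i)))).
pose e4 i := e (rshift n0 (rshift n1 (rshift n2 (rshift n3 i)))).
exists n0, n1, n2, n3, n4, h, s, e1, e2, e3, e4.
split=> [||| u cu].
- apply: (canRL (castmxKV h h)); rewrite -/X [LHS](blk5_of_support X_sym X_support).
  by congr blk5; apply/matrixP => i j; rewrite !mxE XE.
- by split=> i; rewrite ce /block_of /=; have := ltn_ord i; repeat case: ifP => ?; lia.
- by move=> i; rewrite ce /block_of /=; have := ltn_ord i; repeat case: ifP => ?; lia.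
have [q eq] : exists q, e q = u.
  by exists (cast_ord (esym h) (s^-1 u)%g); rewrite /e cast_ordKV permKV.
have : block_of n0 n1 n2 n3 q = 3%N by rewrite -ce eq.
rewrite /block_of; repeat case: ifP => ?; move=> // _.
have lt_q : (q - (n0 + n1 + n2) < n3)%N by lia.
by exists (Ordinal lt_q); rewrite -eq /e3; congr e; apply: val_inj => /=; lia.
Qed.

Section RankTwoSupport.
Variables (R : realFieldType) (n : nat) (A : 'M[R]_n).
Hypothesis A_ge0 : forall i j, 0 <= A i j.
Hypothesis A_sym : forall i j, A i j = A j i.
Hypothesis row_zero : forall i, exists j, A i j = 0.
Hypothesis sing3 : forall I J : {set 'I_n},
  #|I| = 3%N -> #|J| = 3%N -> sym_trop_singular A I J.

Lemma no_triangular_zeros a b c a' b' c' :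
  A a a' = 0 -> A b b' = 0 -> A c c' = 0 ->
  A a b' != 0 -> A a c' != 0 -> A b c' != 0 -> False.
Proof.
move=> Aaa' Abb' Acc' Aab' Aac' Abc'.
have [cardI cardJ nonsing] :=
  triangular_zeros_nonsingular A_ge0 Aaa' Abb' Acc' Aab' Aac' Abc'.
exact: nonsing (sing3 cardI cardJ).
Qed.

Lemma loop_nonloop_zero u v : A u u != 0 -> A v v = 0 -> A u v = 0.
Proof.
move=> Auu Avv; have [k Auk] := row_zero u; apply/eqP/contraT => Auv.
by exfalso; apply: (no_triangular_zeros (c := k) Auk Avv _ Auv Auu); rewrite A_sym.
Qed.

Lemma adj_loopE u v : A u v != 0 -> (A u u == 0) = (A v v == 0).
Proof.
move=> Auv; case: (eqVneq (A u u) 0) => Auu; case: (eqVneq (A v v) 0) => Avv //.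
  by move: Auv; rewrite A_sym (loop_nonloop_zero Avv Auu) eqxx.
by move: Auv; rewrite (loop_nonloop_zero Auu Avv) eqxx.
Qed.

Lemma loop_adj_trans i j k : A i i != 0 -> A i j != 0 -> A i k != 0 -> A j k != 0.
Proof.
move=> Aii Aij Aik; have Ajj : A j j != 0 by rewrite -(adj_loopE Aij).
have [m Aim] := row_zero i; apply/eqP => Ajk.
by apply: (no_triangular_zeros (c := k) Aim Ajk _ Aik Aij Ajj); rewrite A_sym.
Qed.

Lemma no_three_orthogonal_loops x y z :
  A x x != 0 -> A y y != 0 -> A z z != 0 -> A x y = 0 -> A y z = 0 -> A z x = 0 -> False.
Proof.
move=> Axx Ayy Azz Axy Ayz Azx.
have [cardI nonsing] := loop_cycle_nonsingular A_ge0 Axx Ayy Azz Axy Ayz Azx.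
exact: nonsing (sing3 cardI cardI).
Qed.

Lemma nonloop_no_triangle a b c : A b b = 0 -> A a b != 0 -> A b c != 0 -> A a c = 0.
Proof.
move=> Abb Aab Abc; apply/eqP/contraT => Aac.
have /eqP Aaa : A a a == 0 by rewrite (adj_loopE Aab) Abb.
have /eqP Acc : A c c == 0 by rewrite -(adj_loopE Abc) Abb.
by exfalso; apply: (no_triangular_zeros Aaa Abb Acc Aab Aac Abc).
Qed.

Lemma nonloop_common_nbr v w u x :
  A v v = 0 -> A v w != 0 -> A v u != 0 -> A u x != 0 -> A w x != 0.
Proof.
move=> Avv Avw Avu Aux; apply/eqP => Awx.
have /eqP Auu : A u u == 0 by rewrite -(adj_loopE Avu) Avv.
by apply: (no_triangular_zeros Auu Awx Avv Aux); rewrite A_sym.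
Qed.

Definition reach2 u : {set 'I_n} :=
  [set x | (A u x != 0) || [exists w, (A u w != 0) && (A w x != 0)]].

(* By [nonloop_common_nbr] the component of an unlooped u is complete bipartite
   and equals [reach2 u]; the colour of u records its side as adjacency to a
   chosen vertex of the component. *)
Definition color u : bool :=
  if [pick x in reach2 u] is Some m then A u m != 0 else false.

Lemma reach2_adj v w : A v v = 0 -> A v w != 0 -> reach2 v = reach2 w.
Proof.
suff sub v' w' : A v' v' = 0 -> A v' w' != 0 -> reach2 v' \subset reach2 w'.
  move=> Avv Avw; have /eqP Aww : A w w == 0 by rewrite -(adj_loopE Avw) Avv.
  by apply/eqP; rewrite eqEsubset !sub // A_sym.
move=> Avv Avw; apply/subsetP => x; rewrite !inE => /orP[Avx|/existsP[u /andP[Avu Aux]]].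
  by apply/orP; right; apply/existsP; exists v'; rewrite A_sym Avw.
by rewrite (nonloop_common_nbr Avv Avw Avu Aux).
Qed.

Lemma color_adj v w : A v v = 0 -> A v w != 0 -> color v != color w.
Proof.
move=> Avv Avw; rewrite /color -(reach2_adj Avv Avw).
case: pickP => [m|none]; last by move: (none w); rewrite inE Avw.
rewrite inE => /orP m_reach.
have one_adj : (A v m != 0) || (A w m != 0).
  case: m_reach => [->//|/existsP[u /andP[Avu Aum]]].
  by rewrite (nonloop_common_nbr Avv Avw Avu Aum) orbT.
case: (eqVneq (A v m) 0) => Avm; case: (eqVneq (A w m) 0) => Awm //=.
  by rewrite Avm Awm eqxx in one_adj.
have /eqP Amm : A m m == 0 by rewrite -(adj_loopE Avm) Avv.
by move: Avw; rewrite (nonloop_no_triangle Amm Avm) ?eqxx // A_sym.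
Qed.

(* The block of u in the normal form: 0 for a zero row, 1 or 2 for a looped u
   according to its adjacency to a chosen looped r (the inner [else] is
   unreachable), 3 or 4 for the two colours of the bipartite part. *)
Definition vclass u : nat :=
  if A u u != 0 then
    if [pick r | A r r != 0] is Some r then (if A r u != 0 then 1%N else 2%N) else 1%N
  else if [forall v, A u v == 0] then 0%N else if color u then 3%N else 4%N.

Lemma vclass_lt5 u : (vclass u < 5)%N.
Proof.
rewrite /vclass; case: ifP => _; first by case: pickP => // r _; case: ifP.
by case: ifP => //; case: ifP.
Qed.

Lemma loop_vclassE u : (A u u != 0) = (vclass u == 1%N) || (vclass u == 2%N).
Proof.
rewrite /vclass; case: ifP => _; first by case: pickP => // r _; case: ifP.
by case: ifP => //; case: ifP.
Qed.

Lemma vclass_loop u0 : A u0 u0 != 0 -> exists2 r, A r r != 0 &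
  forall u, A u u != 0 -> vclass u = if A r u != 0 then 1%N else 2%N.
Proof.
rewrite /vclass => Au0; case: pickP => [r Arr|none]; first by exists r => // u ->.
by move: (none u0); rewrite Au0.
Qed.

Lemma vclass_nonloop u v : A u u = 0 -> A u v != 0 -> vclass u = if color u then 3%N else 4%N.
Proof.
move=> Auu Auv; rewrite /vclass Auu eqxx /=.
by case: ifP => // /forallP/(_ v); rewrite (negbTE Auv).
Qed.

Lemma vclass_support u v : A u v != 0 -> block_compatible (vclass u) (vclass v).
Proof.
move=> Auv; have Avu : A v u != 0 by rewrite A_sym.
case: (eqVneq (A u u) 0) => Auu.
  have /eqP Avv : A v v == 0 by rewrite -(adj_loopE Auv) Auu.
  rewrite (vclass_nonloop Auu Auv) (vclass_nonloop Avv Avu).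
  by move: (color_adj Auu Auv); case: (color u); case: (color v).
have Avv : A v v != 0 by rewrite -(adj_loopE Auv).
have [r Arr vclassE] := vclass_loop Auu; rewrite !vclassE //.
suff -> : (A r u != 0) = (A r v != 0) by case: (A r v != 0).
by apply/idP/idP => Ar_; [apply: (loop_adj_trans Auu) | apply: (loop_adj_trans Avv)];
  rewrite // A_sym.
Qed.

Lemma vclass1_adj u v : vclass u = 1%N -> vclass v = 1%N -> A u v != 0.
Proof.
move=> cu cv; have Auu : A u u != 0 by rewrite loop_vclassE cu.
have Avv : A v v != 0 by rewrite loop_vclassE cv.
have [r Arr vclassE] := vclass_loop Auu; move: cu cv; rewrite !vclassE //.
case: (eqVneq (A r u) 0) => // Aru _; case: (eqVneq (A r v) 0) => // Arv _.
exact: loop_adj_trans Arr Aru Arv.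
Qed.

Lemma vclass2_adj u v : vclass u = 2%N -> vclass v = 2%N -> A u v != 0.
Proof.
move=> cu cv; have Auu : A u u != 0 by rewrite loop_vclassE cu orbT.
have Avv : A v v != 0 by rewrite loop_vclassE cv orbT.
have [r Arr vclassE] := vclass_loop Auu; move: cu cv; rewrite !vclassE //.
case: (eqVneq (A r u) 0) => // Aru _; case: (eqVneq (A r v) 0) => // Arv _.
apply/eqP => Auv; apply: (no_three_orthogonal_loops Arr Auu Avv Aru Auv).
by rewrite A_sym.
Qed.

Lemma vclass4_nbr v : vclass v = 4%N -> exists2 u, vclass u = 3%N & A u v != 0.
Proof.
move=> cv; have /eqP Avv : A v v == 0 by rewrite -[_ == 0]negbK loop_vclassE cv.
have [w Avw] : exists w, A v w != 0.
  by move: cv; rewrite /vclass Avv eqxx /=; case: ifP => // /forallPn.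
have /eqP Aww : A w w == 0 by rewrite -(adj_loopE Avw) Avv.
have Awv : A w v != 0 by rewrite A_sym.
exists w => //; rewrite (vclass_nonloop Aww Awv).
move: cv (color_adj Avv Avw); rewrite (vclass_nonloop Avv Avw).
by case: (color v); case: (color w).
Qed.

Lemma blk5_normal_form :
  exists (n0 n1 n2 n3 n4 : nat) (h : (n0 + (n1 + (n2 + (n3 + n4))))%N = n)
         (s : 'S_n) (B1 : 'M[R]_n1) (B2 : 'M[R]_n2) (C : 'M[R]_(n3, n4)),
    [/\ (\matrix_(i, j) A (s i) (s j)) = castmx (h, h) (blk5 n0 B1 B2 C),
        B1^T = B1 /\ (forall i j, 0 < B1 i j),
        B2^T = B2 /\ (forall i j, 0 < B2 i j),
        (forall i j, 0 <= C i j)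
      & (forall j, exists i, C i j != 0)].
Proof.
have AT : A^T = A by apply/matrixP => i j; rewrite mxE A_sym.
have [n0 [n1 [n2 [n3 [n4 [h [s [e1 [e2 [e3 [e4 [EA [c1 c2] c4 onto3]]]]]]]]]]]] :=
  blk5_relabel AT vclass_lt5 vclass_support.
exists n0, n1, n2, n3, n4, h, s; do 3!eexists; split; first exact: EA.
- split=> [|i j]; first by apply/matrixP => i j; rewrite !mxE A_sym.
  by rewrite mxE lt0r A_ge0 andbT vclass1_adj.
- split=> [|i j]; first by apply/matrixP => i j; rewrite !mxE A_sym.
  by rewrite mxE lt0r A_ge0 andbT vclass2_adj.
- by move=> i j; rewrite mxE.
move=> j; have [u cu Auv] := vclass4_nbr (c4 j).
by have [i e3i] := onto3 u cu; exists i; rewrite mxE e3i.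
Qed.
End RankTwoSupport.

Unset Implicit Arguments.

Theorem lemma4 (R : realFieldType) (n : nat) (A : 'M[R]_n) :
  A^T = A -> normalized A -> sym_trop_rank_is A 2 ->
  (exists (n0 n1 n2 n3 n4 : nat) (h : (n0 + (n1 + (n2 + (n3 + n4))))%N = n)
          (s : 'S_n) (B1 : 'M[R]_n1) (B2 : 'M[R]_n2) (C : 'M[R]_(n3, n4)),
     [/\ (\matrix_(i, j) A (s i) (s j)) = castmx (h, h) (blk5 n0 B1 B2 C),
         B1^T = B1 /\ (forall i j, 0 < B1 i j),
         B2^T = B2 /\ (forall i j, 0 < B2 i j),
         (forall i j, 0 <= C i j)
       & (forall j, exists i, C i j != 0)])
  /\ A != 0 /\ ~ (forall i j, 0 < A i j).
Proof.
move=> AT [rowA _] [[I [J [cardI cardJ nonsingIJ]]] rank_le2].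
have A_sym i j : A i j = A j i by rewrite -{1}AT mxE.
have A_ge0 i j : 0 <= A i j by case: (rowA i).
have row_zero i : exists j, A i j = 0 by case: (rowA i).
split; last split.
- apply: (blk5_normal_form A_ge0 A_sym row_zero) => I' J' cardI' cardJ'.
  by apply: rank_le2; rewrite ?cardI' ?cardJ'.
- apply/eqP => A0; apply: nonsingIJ; apply: (const_cards2_singular (x := 0)) => // i j _ _.
  by rewrite A0 mxE.
have /card_gt0P[a _] : (0 < #|I|)%N by rewrite cardI.
by move=> A_gt0; have [j Aaj] := row_zero a; move: (A_gt0 a j); rewrite Aaj ltxx.
Qed.
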